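(* Let $(\mathfrak g,d,[\,,\,])$ be a differential graded Lie algebra and $\eta:\mathfrak g\to\mathfrak g[-1]$ any linear map. Let $(\mathfrak g,\mu_* )$ be the $L_\infty$-algebra given by $\mu_1=d$, $\mu_2(v_1,v_2)=(d\eta+\eta d)[v_1,v_2]$ and, for $n\ge3$, $\mu_n(v_1,\dots,v_n)=(-1)^n\sum_{\sigma\in Sh(n-1,n)}(-1)^{\tilde\sigma}e(\sigma)\,\eta[\mu_{n-1}(v_{\sigma(1)},\dots,v_{\sigma(n-1)}),v_{\sigma(n)}]$. Then the Kuranishi map $K$ with components $$K_1(v_1)=v_1,\qquad K_2(v_1,v_2)=\eta[v_1,v_2],\qquad K_n=0\ \ (n\ge3)$$ is an $L_\infty$-isomorphism from $(\mathfrak g,\mu_* )$ to the differential abelian Lie algebra $(\mathfrak g,d,0)$.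
   Context: For a $\mathbb Z$-graded vector space $\mathfrak g$, $\mathfrak g[n]$ is the shift with $(\mathfrak g[n])^i=\mathfrak g^{i+n}$; $\tilde v$ is the parity of the degree of homogeneous $v$. $Sh(k,n)$ is the set of permutations $\sigma$ of $\{1,\dots,n\}$ with $\sigma(1)<\dots<\sigma(k)$ and $\sigma(k+1)<\dots<\sigma(n)$; $\tilde\sigma$ is its parity and the Koszul sign $e(\sigma)$ is defined by $v_{\sigma(1)}\wedge\dots\wedge v_{\sigma(n)}=(-1)^{\tilde\sigma}e(\sigma)v_1\wedge\dots\wedge v_n$. An $L_\infty$-algebra is a graded space with maps $\mu_k:\Lambda^k\mathfrak g\to\mathfrak g[2-k]$ satisfying, for all $n\ge1$, $\sum_{k+l=n+1}\sum_{\sigma\in Sh(k,n)}(-1)^{\tilde\sigma+k(l-1)}e(\sigma)\mu_l(\mu_k(v_{\sigma(1)},\dots,v_{\sigma(k)}),v_{\sigma(k+1)},\dots,v_{\sigma(n)})=0$. A differential abelian Lie algebra $(\mathfrak g',d',0)$ is the $L_\infty$-algebra with $\mu'_1=d'$ and $\mu'_n=0$ for $n\ge2$. An $L_\infty$-morphism from an $L_\infty$-algebra $(\mathfrak g,\mu_* )$ to a differential abelian Lie algebra $(\mathfrak g',d',0)$ is a family of linear maps $F_n:\Lambda^n\mathfrak g\to\mathfrak g'[1-n]$, $n\ge1$, such that for all $n\ge1$ and all $v_1,\dots,v_n$, $$d'F_n(v_1,\dots,v_n)=\sum_{k+l=n+1}\sum_{\sigma\in Sh(k,n)}(-1)^{\tilde\sigma+k(l-1)}e(\sigma)\,F_l\big(\mu_k(v_{\sigma(1)},\dots,v_{\sigma(k)}),v_{\sigma(k+1)},\dots,v_{\sigma(n)}\big).$$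 It is an $L_\infty$-isomorphism if $F_1:\mathfrak g\to\mathfrak g'$ is an isomorphism of graded vector spaces. *)

From HB Require Import structures.
From mathcomp Require Import all_boot all_order all_algebra all_fingroup.
Set Implicit Arguments.
Unset Strict Implicit.
Unset Printing Implicit Defensive.
Import Order.TTheory GRing.Theory Num.Theory.
Local Open Scope ring_scope.

(* A Z-graded vector space g is modelled as a K-vector space V together with
   the family of its homogeneous components G i = g^i (subspaces of V) such
   that V is their direct sum.  A homogeneous element "with its degree" is a
   pair (i, v) with v \in G i. *)

Definition par (i : int) : bool := odd `|i|%N.
Definition sgn {K : fieldType} (b : bool) : K := (-1) ^+ b.

Section Defs.
Variables (K : fieldType) (V : lmodType K).

Definition hnth (s : seq (int * V)) (i : nat) : int * V := nth (0%Z, 0) s i.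

Definition hom_seq (G : int -> {pred V}) (s : seq (int * V)) : bool :=
  all (fun p => p.2 \in G p.1) s.

Definition degsum (s : seq (int * V)) : int := \sum_(p <- s) p.1.

Definition graded_space (G : int -> {pred V}) : Prop :=
  [/\ forall i, 0 \in G i,
      forall i (a : K) x y, x \in G i -> y \in G i -> a *: x + y \in G i,
      forall v : V, exists s : seq (int * V),
         [/\ uniq (map fst s), hom_seq G s & v = \sum_(p <- s) p.2] &
      forall s : seq (int * V), uniq (map fst s) -> hom_seq G s ->
         \sum_(p <- s) p.2 = 0 -> all (fun p => p.2 == 0) s].

(* f : g -> g[k], i.e. f maps g^i into g^(i+k) *)
Definition has_degree (G : int -> {pred V}) (f : V -> V) (k : int) : Prop :=
  forall i x, x \in G i -> f x \in G (i + k).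

Definition is_dgla (G : int -> {pred V}) (d : V -> V) (br : V -> V -> V) : Prop :=
  has_degree G d 1 /\
  (forall x, d (d x) = 0) /\
  (forall i j x y, x \in G i -> y \in G j -> br x y \in G (i + j)) /\
  (forall (a : K) x y z, br (a *: x + y) z = a *: br x z + br y z) /\
  (forall (a : K) x y z, br z (a *: x + y) = a *: br z x + br z y) /\
  (forall i j x y, x \in G i -> y \in G j ->
     br x y = - (sgn (par i && par j) *: br y x)) /\
  (forall i j k x y z, x \in G i -> y \in G j -> z \in G k ->
     br x (br y z) = br (br x y) z + sgn (par i && par j) *: br y (br x z)) /\
  (forall i j x y, x \in G i -> y \in G j ->
     d (br x y) = br (d x) y + sgn (par i) *: br x (d y)).

(* (k,n)-unshuffles: sigma(1)<..<sigma(k), sigma(k+1)<..<sigma(n) *)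
Definition shuffle (n k : nat) (s : {perm 'I_n}) : bool :=
  [forall i : 'I_n, forall j : 'I_n,
     ((i < j)%N && ((j < k)%N || (k <= i)%N)) ==> (s i < s j)%N].

Definition pseq (s : seq (int * V)) (sg : {perm 'I_(size s)}) : seq (int * V) :=
  [seq hnth s (sg i) | i <- enum 'I_(size s)].
Arguments pseq : clear implicits.

Definition koszul (s : seq (int * V)) (sg : {perm 'I_(size s)}) : K :=
  \prod_(i < size s) \prod_(j < size s | (i < j)%N && (sg j < sg i)%N)
     sgn (par (hnth s (sg i)).1 && par (hnth s (sg j)).1).
Arguments koszul : clear implicits.

Definition shsign (s : seq (int * V)) (sg : {perm 'I_(size s)}) : K :=
  sgn (odd_perm sg) * koszul s sg.
Arguments shsign : clear implicits.

Fixpoint mu_rec (d eta : V -> V) (br : V -> V -> V) (n : nat)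
    (s : seq (int * V)) : V :=
  match n with
  | 0 => 0
  | 1 => d (hnth s 0).2
  | 2 => d (eta (br (hnth s 0).2 (hnth s 1).2))
         + eta (d (br (hnth s 0).2 (hnth s 1).2))
  | m.+1 =>
      (-1) ^+ m.+1 *:
      \sum_(sg : {perm 'I_(size s)} | shuffle m sg)
         shsign s sg *: eta (br (mu_rec d eta br m (take m (pseq s sg)))
                                (hnth (pseq s sg) m).2)
  end.

Definition mu d eta br (s : seq (int * V)) : V := mu_rec d eta br (size s) s.

(* The Kuranishi map: K_1 = id, K_2 = eta [ , ], K_n = 0 otherwise.
   F_n(v_1,..,v_n) is written F [:: v_1; ...; v_n]. *)
Definition kuranishi (eta : V -> V) (br : V -> V -> V) (s : seq V) : V :=
  match s with
  | [:: x] => x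
  | [:: x; y] => eta (br x y)
  | _ => 0
  end.

Definition linfty_morphism_to_abelian (G : int -> {pred V})
    (mu : seq (int * V) -> V) (d' : V -> V) (F : seq V -> V) : Prop :=
  [/\
      forall (l r : seq V) (a : K) x y,
        F (l ++ (a *: x + y) :: r) = a *: F (l ++ x :: r) + F (l ++ y :: r),
      (* graded antisymmetric, i.e. defined on Lambda^n g *)
      forall (l r : seq V) i j x y, x \in G i -> y \in G j ->
        F (l ++ x :: y :: r) = - (sgn (par i && par j) *: F (l ++ y :: x :: r)),
      forall s, hom_seq G s -> (0 < size s)%N ->
        F (map snd s) \in G (degsum s + 1 - (size s)%:Z) &
      forall s, hom_seq G s -> (0 < size s)%N ->
        d' (F (map snd s)) =
        \sum_(k < size s) \sum_(sg : {perm 'I_(size s)} | shuffle k.+1 sg)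
           (shsign s sg * sgn (odd (k.+1 * (size s - k.+1)))) *:
           F (mu (take k.+1 (pseq s sg)) :: map snd (drop k.+1 (pseq s sg)))].

Definition linfty_iso_to_abelian (G : int -> {pred V})
    (mu : seq (int * V) -> V) (d' : V -> V) (F : seq V -> V) : Prop :=
  linfty_morphism_to_abelian G mu d' F /\ bijective (fun v => F [:: v]).

End Defs.

(* Since K_l = 0 for l >= 3, only the terms with l = 1 and l = 2 survive on the
   right-hand side of the n-th morphism equation for K.  The l = 1 term is
   mu_n(v_1, ..., v_n), because the only (n, n)-unshuffle is the identity.
   For n >= 3 the l = 2 term is, up to the sign (-1)^(n-1), exactly the sum
   over Sh(n-1, n) defining mu_n, so it equals -mu_n and both sides vanish.
   For n = 2 the l = 2 term is -eta d[v_1, v_2] by the Leibniz rule and graded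
   antisymmetry; it cancels the eta d part of mu_2 = (d eta + eta d)[ , ],
   leaving d K_2. *)

From mathcomp Require Import all_boot all_order all_algebra all_fingroup.
Set Implicit Arguments.
Unset Strict Implicit.
Unset Printing Implicit Defensive.
Import GRing.Theory.
Local Open Scope ring_scope.

Lemma perm_incr_eq1 n (sg : 'S_n) : {homo sg : i j / (i < j)%N} -> sg = 1%g.
Proof.
move=> sg_incr.
have vsg : map (val \o sg) (enum 'I_n) = iota 0 n.
  apply: (irr_sorted_eq ltn_trans ltnn); last 1 first.
  - move=> k; rewrite mem_iota /=; apply/mapP/idP => [[i _ ->]|k_lt_n].
      exact: ltn_ord.
    by exists ((sg^-1)%g (Ordinal k_lt_n)); rewrite ?mem_enum //= permKV.
  - apply: (@homo_sorted _ _ _ (relpre val ltn)) => //.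
    by rewrite -sorted_map val_enum_ord iota_ltn_sorted.
  - exact: iota_ltn_sorted.
apply/permP => i; rewrite perm1; apply/val_inj.
have := congr1 (nth 0%N ^~ i) vsg.
by rewrite (nth_map i) ?size_enum_ord // nth_ord_enum nth_iota.
Qed.

Lemma shuffle_eq1 n (sg : 'S_n) : shuffle n sg -> sg = 1%g.
Proof.
move=> /forallP sh; apply: perm_incr_eq1 => i j ij.
by move: (sh i) => /forallP/(_ j)/implyP; apply; rewrite ij ltn_ord.
Qed.

Lemma shuffle1 n k : shuffle k (1%g : 'S_n).
Proof.
apply/forallP => i; apply/forallP => j; apply/implyP => /andP[ij _].
by rewrite !perm1.
Qed.

Lemma shuffle_S2 (sg : 'S_2) : shuffle 1 sg.
Proof.
apply/forallP => i; apply/forallP => j; apply/implyP.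
by case: i j => [[|[|?]] ?] [[|[|?]] ?].
Qed.

Lemma ord2P (i : 'I_2) : i = ord0 \/ i = ord_max.
Proof. by case: i => [[|[|//]] lt_i2]; [left|right]; apply: val_inj. Qed.

Lemma perm2P (sg : 'S_2) : sg = 1%g \/ sg = tperm ord0 ord_max.
Proof.
have sg_max : sg ord_max != sg ord0 by rewrite (inj_eq perm_inj).
case: (ord2P (sg ord0)) => sg0; [left|right]; apply/permP => i;
  case: (ord2P i) => ->; rewrite ?perm1 ?tpermL ?tpermR ?sg0 //;
  by case: (ord2P (sg ord_max)) sg_max => ->; rewrite sg0.
Qed.

Lemma sum_S2 (M : nmodType) (f : 'S_2 -> M) :
  \sum_(sg : 'S_2) f sg = f 1%g + f (tperm ord0 ord_max).
Proof.
have t_neq1 : tperm ord0 (ord_max : 'I_2) != 1%g.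
  by apply/eqP => /permP/(_ ord0); rewrite tpermL perm1.
rewrite (bigD1 1%g) // (bigD1 (tperm ord0 ord_max)) //= big1 ?addr0 // => sg.
by case: (perm2P sg) => ->; rewrite ?eqxx ?andbF.
Qed.

Lemma par_addz1 (i : int) : par (i + 1) = ~~ par i.
Proof.
rewrite /par; case: i => [n|[|n]] //; first by rewrite -PoszD absz_nat addn1.
have -> : Negz n.+1 + 1 = - (n.+1)%:Z by rewrite NegzE -addn1 PoszD opprD addrK.
by rewrite NegzE !abszN /= negbK.
Qed.

Lemma sgn_andb_negb (K : fieldType) (b c : bool) :
  sgn (b && c) * sgn (~~ b && c) = sgn c :> K.
Proof. by case: b; rewrite /sgn /= ?mulr1 ?mul1r. Qed.

Section Unshuffles.
Variables (K : fieldType) (V : lmodType K).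
Implicit Types (s : seq (int * V)) (x y : int * V).

Lemma size_pseq s (sg : {perm 'I_(size s)}) : size (pseq sg) = size s.
Proof. by rewrite /pseq size_map size_enum_ord. Qed.

Lemma pseq1 s : pseq (s := s) 1%g = s.
Proof.
rewrite /pseq (eq_map (g := fun i : 'I_(size s) => hnth s i)); last first.
  by move=> i; rewrite perm1.
by rewrite -[s in RHS](mkseq_nth (0%Z, 0)) /mkseq -val_enum_ord -map_comp.
Qed.

Lemma pseq_pair x y (sg : {perm 'I_2}) :
  pseq (s := [:: x; y]) sg =
  [:: hnth [:: x; y] (sg ord0); hnth [:: x; y] (sg ord_max)].
Proof.
rewrite /pseq /= enum_ordSl /= enum_ordSl enum_ord0 /=.
by congr [:: _; hnth _ (sg _)]; apply/val_inj.
Qed.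

Lemma shsign1 s : shsign (s := s) 1%g = 1.
Proof.
rewrite /shsign odd_perm1 mul1r /koszul.
apply: big1 => i _; apply: big1 => j; rewrite !perm1 => /andP[ij ji].
by move: (ltn_trans ij ji); rewrite ltnn.
Qed.

Lemma shsign_tperm_pair x y :
  shsign (s := [:: x; y]) (tperm ord0 ord_max) = - sgn (par y.1 && par x.1).
Proof.
rewrite /shsign odd_tperm /koszul /= big_ord_recr big_ord1 /=.
set a := widen_ord _ _; have -> : a = ord0 by apply/val_inj.
rewrite tpermL tpermR !big_mkcond !big_ord_recr !big_ord0 /= tpermR /=.
rewrite big_pred0; last by case => [[|[|?]] ?].
by rewrite /sgn expr1 !mul1r mulr1 mulN1r.
Qed.

End Unshuffles.

Section MorphismTerms.
Variables (K : fieldType) (V : lmodType K).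
Variables (mu : seq (int * V) -> V) (F : seq V -> V).
Implicit Types (s : seq (int * V)) (x y : int * V).

Definition lmorph_term s (k : nat) : V :=
  \sum_(sg : {perm 'I_(size s)} | shuffle k sg)
     (shsign sg * sgn (odd (k * (size s - k)))) *:
     F (mu (take k (pseq sg)) :: map snd (drop k (pseq sg))).

Lemma lmorph_term_size s : lmorph_term s (size s) = F [:: mu s].
Proof.
rewrite /lmorph_term (eq_bigl (pred1 1%g)); last first.
  by move=> sg; apply/idP/eqP => [/shuffle_eq1|->] //; apply: shuffle1.
rewrite big_pred1_eq shsign1 pseq1 subnn muln0 mulr1 scale1r.
by rewrite take_size drop_size.
Qed.

Lemma lmorph_term_pair x y :
  lmorph_term [:: x; y] 1 =
  sgn (par y.1 && par x.1) *: F [:: mu [:: y]; x.2] - F [:: mu [:: x]; y.2].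
Proof.
rewrite /lmorph_term (eq_bigl xpredT) => [|sg]; last exact: shuffle_S2.
rewrite sum_S2 shsign1 pseq1 shsign_tperm_pair pseq_pair tpermL tpermR /=.
by rewrite /sgn expr1 mul1r mulrN1 opprK scaleN1r addrC.
Qed.

End MorphismTerms.

Section Kuranishi.
Variables (K : fieldType) (V : lmodType K) (G : int -> {pred V}).
Variables (d eta : {linear V -> V}) (br : V -> V -> V).
Hypothesis G0 : forall i, 0 \in G i.
Hypothesis d_deg : forall {i x}, x \in G i -> d x \in G (i + 1).
Hypothesis eta_deg : forall {i x}, x \in G i -> eta x \in G (i - 1).
Hypothesis br_deg : forall {i j x y}, x \in G i -> y \in G j ->
  br x y \in G (i + j).
Hypothesis brDl : forall (a : K) x y z, br (a *: x + y) z = a *: br x z + br y z.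
Hypothesis brDr : forall (a : K) x y z, br z (a *: x + y) = a *: br z x + br z y.
Hypothesis br_anti : forall {i j x y}, x \in G i -> y \in G j ->
  br x y = - (sgn (par i && par j) *: br y x).
Hypothesis d_leibniz : forall {i j x y}, x \in G i -> y \in G j ->
  d (br x y) = br (d x) y + sgn (par i) *: br x (d y).

Local Notation kur := (kuranishi eta br).
Local Notation mu_ := (mu d eta br).

Lemma kuranishi_eq0 (s : seq V) : (2 < size s)%N -> kur s = 0.
Proof. by case: s => [|? [|? [|? ?]]]. Qed.

Lemma kuranishi_multilinear (l r : seq V) (a : K) x y :
  kur (l ++ (a *: x + y) :: r) = a *: kur (l ++ x :: r) + kur (l ++ y :: r).
Proof.
case: l => [|w [|w' l]]; last first.
  have long v : (2 < size (w :: w' :: l ++ v :: r))%N.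
    by rewrite /= size_cat /= addnS.
  by rewrite !kuranishi_eq0 ?scaler0 ?addr0 //; apply: long.
all: by case: r => [|z [|z' r]] //=; rewrite ?brDl ?brDr ?linearP ?scaler0 ?addr0.
Qed.

Lemma kuranishi_antisym (l r : seq V) i j x y : x \in G i -> y \in G j ->
  kur (l ++ x :: y :: r) = - (sgn (par i && par j) *: kur (l ++ y :: x :: r)).
Proof.
move=> xi yj; case: l r => [|w l] [|z r].
- by rewrite /= (br_anti xi yj) linearN linearZ.
all: by rewrite !kuranishi_eq0 ?scaler0 ?oppr0 // size_cat /= ?addnS.
Qed.

Lemma kuranishi_degree s : hom_seq G s -> (0 < size s)%N ->
  kur (map snd s) \in G (degsum s + 1 - (size s)%:Z).
Proof.
case: s => [|[i x] [|[j y] [|z s]]] //=.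
- by rewrite /degsum big_seq1 addrK andbT.
- rewrite /degsum !big_cons big_nil addr0 -addrA andbT => /andP[xi yj] _.
  exact/eta_deg/br_deg.
Qed.

Lemma lmorph_term_kuranishi_eq0 (mu' : seq (int * V) -> V) s k :
  (k.+1 < size s)%N -> lmorph_term mu' kur s k = 0.
Proof.
move=> k_lt; apply: big1 => sg _; rewrite kuranishi_eq0 ?scaler0 //.
by rewrite /= size_map size_drop size_pseq ltnS ltn_subRL addn1.
Qed.

Lemma lmorph_term_kuranishi_pair i j x y : x \in G i -> y \in G j ->
  lmorph_term mu_ kur [:: (i, x); (j, y)] 1 = - eta (d (br x y)).
Proof.
move=> xi yj; rewrite lmorph_term_pair /= (br_anti (d_deg yj) xi) par_addz1.
rewrite (d_leibniz xi yj) linearD !linearN !linearZ /= !scalerN scalerA.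
by rewrite sgn_andb_negb opprD addrC.
Qed.

Lemma mu_recSSS m s :
  mu_rec d eta br m.+3 s = (-1) ^+ m.+3 *:
    \sum_(sg : {perm 'I_(size s)} | shuffle m.+2 sg)
       shsign sg *: eta (br (mu_rec d eta br m.+2 (take m.+2 (pseq sg)))
                            (hnth (pseq sg) m.+2).2).
Proof. by []. Qed.

Lemma lmorph_term_kuranishi_pred s : (2 < size s)%N ->
  lmorph_term mu_ kur s (size s).-1 = - mu_ s.
Proof.
case: s => [|x1 [|x2 [|x3 s]]] // _; set s3 := [:: x1, x2, x3 & s].
have size_pseq3 (sg : {perm 'I_(size s3)}) : size (pseq sg) = (size s).+3.
  exact: size_pseq.
rewrite /mu [size s3]/= mu_recSSS exprS mulN1r scaleNr scaler_sumr opprK.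
apply: eq_bigr => sg _.
rewrite (drop_nth (0%Z, 0)) ?size_pseq3 // drop_oversize ?size_pseq3 //.
rewrite size_take size_pseq3 ltnSn /= !subSS subSnn muln1 /sgn signr_odd.
by rewrite scalerA mulrC.
Qed.

Lemma kuranishi_lmorph_eq s : hom_seq G s -> (0 < size s)%N ->
  d (kur (map snd s)) = \sum_(k < size s) lmorph_term mu_ kur s k.+1.
Proof.
have [s_le2|s_gt2] := leqP (size s) 2.
  case: s s_le2 => [|[i x] [|[j y] [|? ?]]] // _.
  - by rewrite big_ord1 (lmorph_term_size _ _ [:: (i, x)]).
  - rewrite /hom_seq /= andbT => /andP[xi yj] _.
    rewrite big_ord_recr big_ord1 (lmorph_term_kuranishi_pair xi yj).
    by rewrite (lmorph_term_size _ _ [:: (i, x); (j, y)]) /= addrC addrK.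
move=> _ _; rewrite kuranishi_eq0 ?size_map // linear0.
have low k : (k.+2 < size s)%N -> lmorph_term mu_ kur s k.+1 = 0.
  exact: lmorph_term_kuranishi_eq0.
move: (lmorph_term_size mu_ kur s) (lmorph_term_kuranishi_pred s_gt2) low.
case: (size s) s_gt2 => [|[|[|n]]] // _ top pred low.
rewrite 2!big_ord_recr big1 => [|k _]; last first.
  by apply: low; rewrite /= !ltnS -ltnS ltn_ord.
by rewrite /ord_max /= top pred add0r addNr.
Qed.

End Kuranishi.

Theorem theorem3p2 (K : fieldType) (V : lmodType K) (G : int -> {pred V})
    (d eta : {linear V -> V}) (br : V -> V -> V) :
  graded_space G -> is_dgla G d br -> has_degree G eta (-1) ->
  linfty_iso_to_abelian G (mu d eta br) d (kuranishi eta br).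
Proof.
move=> [G0 _ _ _] [d_deg [_ [br_deg [brDl [brDr [br_anti [_ d_leibniz]]]]]]] eta_deg.
split; last by exists id.
split.
- exact: (kuranishi_multilinear eta brDl brDr).
- exact: (kuranishi_antisym eta br_anti).
- exact: (kuranishi_degree G0 eta_deg br_deg).
- exact: (kuranishi_lmorph_eq eta d_deg br_anti d_leibniz).
Qed.
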